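(* Let $\mathfrak g\xrightarrow{\mu}\mathfrak h$ be a crossed module of Lie algebras, $\phi:W\to V$ linear, $\rho$ a 2-representation on $\phi$. Let $\omega\in\bigwedge^q\mathfrak g_p^*\otimes V$ and $\Xi=(\xi_0,\dots,\xi_q)\in\mathfrak g_{p+1}^{q+1}$ with $\xi_j=(x_j^0,\dots,x_j^p;y_j)$. Then $$\delta\partial\omega(\Xi)=\partial\delta\omega(\Xi)+\phi\Big(\sum_{j=0}^q(-1)^j\rho_1(x_j^0)\omega(\partial_0\Xi(j))\Big)=\partial\delta\omega(\Xi)+\Delta\delta_{(1)}\omega(\Xi).$$
   Context: Crossed module: Lie algebras $\mathfrak g,\mathfrak h$, Lie homomorphism $\mu$, action $\mathcal L:\mathfrak h\to\mathrm{Der}(\mathfrak g)$ with $\mu(\mathcal L_yx)=[y,\mu(x)]$, $\mathcal L_{\mu(x_0)}x_1=[x_0,x_1]$; $\mathfrak g\oplus_{\mathcal L}\mathfrak h$ has bracket $[(x_0,y_0),(x_1,y_1)]=([x_0,x_1]+\mathcal L_{y_0}x_1-\mathcal L_{y_1}x_0,[y_0,y_1])$. 2-representation: linear $\rho_0^1:\mathfrak h\to\mathfrak{gl}(W)$, $\rho_0^0:\mathfrak h\to\mathfrak{gl}(V)$, $\rho_1:\mathfrak g\to\mathrm{Hom}(V,W)$ with $\rho_0^1,\rho_0^0$ representations, $\phi\rho_0^1(y)=\rho_0^0(y)\phi$, $\rho_1([x_0,x_1])=\rho_1(x_0)\phi\rho_1(x_1)-\rho_1(x_1)\phi\rho_1(x_0)$,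 $\rho_0^0(\mu(x))=\phi\rho_1(x)$, $\rho_0^1(\mu(x))=\rho_1(x)\phi$, $\rho_1(\mathcal L_yx)=\rho_0^1(y)\rho_1(x)-\rho_1(x)\rho_0^0(y)$. $\mathfrak g_0=\mathfrak h$; for $p\ge1$, $\mathfrak g_p=\mathfrak g^p\oplus\mathfrak h$, elements $(x^0,\dots,x^{p-1};y)$, a Lie algebra via identification with composable strings $(a_0,\dots,a_{p-1})\in(\mathfrak g\oplus_{\mathcal L}\mathfrak h)^p$, $a_j=(x^j,y+\sum_{k>j}\mu(x^k))$, componentwise bracket. Face maps $\partial_k:\mathfrak g_{p+1}\to\mathfrak g_p$: $\partial_0(x^0,\dots,x^p;y)=(x^1,\dots,x^p;y)$, $\partial_k(\dots)=(x^0,\dots,x^{k-1}+x^k,\dots,x^p;y)$ ($0<k\le p$), $\partial_{p+1}(\dots)=(x^0,\dots,x^{p-1};y+\mu(x^p))$, applied componentwise to tuples; $\hat t_p(x^0,\dots,x^{p-1};y)=y+\sum\mu(x^j)$. $X(j),X(m,n)$: removal of entries. $C^{p,q}_0=\bigwedge^q\mathfrak g_p^*\otimes V$, $C^{p,q}_1=\bigwedge^q\mathfrak g_p^*\otimes\mathfrak g^*\otimes W$. $\delta:C^{p,q}_0\to C^{p,q+1}_0$ is the Chevalley–Eilenberg differential of $\mathfrak g_p$ with values in $V$ for the representation $\rho_0^0\circ\hat t_p$: $\delta\omega(\xi_0,\dots,\xi_q)=\sum_j(-1)^j\rho_0^0(\hat t_p(\xi_j))\omega(\Xi(j))+\sum_{m<n}(-1)^{m+n}\omega([\xi_m,\xi_n],\Xi(m,n))$.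 $\partial\omega(\Xi)=\sum_{k=0}^{p+1}(-1)^k\omega(\partial_k\Xi)$. $\delta_{(1)}:C^{p,q}_0\to C^{p,q}_1$, $\delta_{(1)}\omega(\Xi;x)=\rho_1(x)\omega(\Xi)$. $\Delta:C^{p,q}_1\to C^{p+1,q+1}_0$, $\Delta\beta(\xi_0,\dots,\xi_q)=\phi\big(\sum_j(-1)^j\beta(\partial_0\Xi(j);x_j^0)\big)$. *)

From HB Require Import structures.
From mathcomp Require Import all_boot all_order all_algebra.
Set Implicit Arguments. Unset Strict Implicit. Unset Printing Implicit Defensive.
Import Order.TTheory GRing.Theory Num.Theory.
Local Open Scope ring_scope.

Section LieDefs.
Variable K : fieldType.

Definition lin (U V : lmodType K) (f : U -> V) : Prop :=
  forall (a : K) (x y : U), f (a *: x + y) = a *: f x + f y.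

Definition is_lie (L : lmodType K) (br : L -> L -> L) : Prop :=
  [/\ forall z, lin (fun x => br x z),
      forall x, lin (br x),
      forall x, br x x = 0 &
      forall x y z, br x (br y z) + br y (br z x) + br z (br x y) = 0].

Definition is_lie_hom (L1 L2 : lmodType K) (br1 : L1 -> L1 -> L1)
  (br2 : L2 -> L2 -> L2) (f : L1 -> L2) : Prop :=
  lin f /\ forall x y, f (br1 x y) = br2 (f x) (f y).

Definition is_rep (h V : lmodType K) (brh : h -> h -> h) (rho : h -> V -> V) : Prop :=
  [/\ forall y, lin (rho y),
      forall v, lin (fun y => rho y v) &
      forall y y' v, rho (brh y y') v = rho y (rho y' v) - rho y' (rho y v)].

Record crossed_module (g h : lmodType K) (brg : g -> g -> g) (brh : h -> h -> h)
  (mu : g -> h) (act : h -> g -> g) : Prop := {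
  cm_lie_g : is_lie brg;
  cm_lie_h : is_lie brh;
  cm_mu : is_lie_hom brg brh mu;
  cm_act_lin : forall y, lin (act y);
  cm_act_der : forall y x0 x1, act y (brg x0 x1) = brg (act y x0) x1 + brg x0 (act y x1);
  cm_act_linh : forall x, lin (fun y => act y x);
  cm_act_hom : forall y y' x, act (brh y y') x = act y (act y' x) - act y' (act y x);
  cm_equiv : forall y x, mu (act y x) = brh y (mu x);
  cm_peiffer : forall x0 x1, act (mu x0) x1 = brg x0 x1 }.

Record two_rep (g h V W : lmodType K) (brg : g -> g -> g) (brh : h -> h -> h)
  (mu : g -> h) (act : h -> g -> g) (phi : W -> V)
  (rho01 : h -> W -> W) (rho00 : h -> V -> V) (rho1 : g -> V -> W) : Prop := {
  tr_rho01 : is_rep brh rho01;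
  tr_rho00 : is_rep brh rho00;
  tr_rho1_lin : forall x, lin (rho1 x);
  tr_rho1_linx : forall v, lin (fun x => rho1 x v);
  tr_phi_equiv : forall y w, phi (rho01 y w) = rho00 y (phi w);
  tr_rho1_br : forall x0 x1 v,
      rho1 (brg x0 x1) v = rho1 x0 (phi (rho1 x1 v)) - rho1 x1 (phi (rho1 x0 v));
  tr_mu0 : forall x v, rho00 (mu x) v = phi (rho1 x v);
  tr_mu1 : forall x w, rho01 (mu x) w = rho1 x (phi w);
  tr_act : forall y x v, rho1 (act y x) v = rho01 y (rho1 x v) - rho1 x (rho00 y v) }.

(* An element of C^{p,q}_0 = wedge^q g_p^* (x) V: a q-linear alternating map,
   represented as a function on sequences, constrained on sequences of size q. *)
Definition is_cochain (G V : lmodType K) (q : nat) (w : seq G -> V) : Prop :=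
  (forall (s1 s2 : seq G) (a : K) (u v : G), size s1 + size s2 + 1 = q ->
     w (s1 ++ (a *: u + v) :: s2) = a *: w (s1 ++ u :: s2) + w (s1 ++ v :: s2)) /\
  (forall (s1 s2 s3 : seq G) (u : G), size s1 + size s2 + size s3 + 2 = q ->
     w (s1 ++ u :: s2 ++ u :: s3) = 0).
End LieDefs.

Definition rm1 (T : Type) (j : nat) (s : seq T) : seq T :=
  [seq x.2 | x <- zip (iota 0 (size s)) s & x.1 != j].
Definition rm2 (T : Type) (m n : nat) (s : seq T) : seq T :=
  [seq x.2 | x <- zip (iota 0 (size s)) s & (x.1 != m) && (x.1 != n)].

Notation gp g h p := ({ffun 'I_p -> g} * h)%type.

Section Simplicial.
Variables (K : fieldType) (g h : lmodType K) (brg : g -> g -> g) (brh : h -> h -> h)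
  (mu : g -> h) (act : h -> g -> g).

(* x^m as a function of the natural number m (0 outside the range) *)
Definition xat (p : nat) (x : {ffun 'I_p -> g}) (m : nat) : g :=
  if @insub nat (fun k => (k < p)%N) 'I_p m is Some i then x i else 0.

(* second component of the j-th entry of the composable string: y + sum_{k>j} mu(x^k) *)
Definition ystr (p : nat) (xi : gp g h p) (j : nat) : h :=
  xi.2 + \sum_(j.+1 <= k < p) mu (xat xi.1 k).

(* the Lie bracket of g_p, transported from the componentwise bracket of
   composable strings in (g (+)_L h)^p *)
Definition gp_br (p : nat) (xi eta : gp g h p) : gp g h p :=
  ([ffun i : 'I_p => brg (xi.1 i) (eta.1 i) + act (ystr xi i) (eta.1 i)
                     - act (ystr eta i) (xi.1 i)], brh xi.2 eta.2).

Definition that (p : nat) (xi : gp g h p) : h := xi.2 + \sum_(k < p) mu (xi.1 k).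

Definition face (p k : nat) (xi : gp g h p.+1) : gp g h p :=
  ([ffun i : 'I_p => if (i.+1 < k)%N then xat xi.1 i
                     else if i.+1 == k then xat xi.1 i + xat xi.1 i.+1
                     else xat xi.1 i.+1],
   if k == p.+1 then xi.2 + mu (xat xi.1 p) else xi.2).

Variables (V W : lmodType K) (phi : W -> V) (rho00 : h -> V -> V) (rho1 : g -> V -> W).

Definition delta0 (p : nat) (w : seq (gp g h p) -> V) (X : seq (gp g h p)) : V :=
  \sum_(j < size X) (-1) ^+ j *: rho00 (that (nth 0 X j)) (w (rm1 j X))
  + \sum_(m < size X) \sum_(n < size X | (m < n)%N)
      (-1) ^+ (m + n) *: w (gp_br (nth 0 X m) (nth 0 X n) :: rm2 m n X).

Definition bd (p : nat) (w : seq (gp g h p) -> V) (X : seq (gp g h p.+1)) : V :=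
  \sum_(k < p.+2) (-1) ^+ k *: w (map (face k) X).

Definition delta1 (p : nat) (w : seq (gp g h p) -> V) (X : seq (gp g h p)) (x : g) : W :=
  rho1 x (w X).

Definition Delta (p : nat) (b : seq (gp g h p) -> g -> W) (X : seq (gp g h p.+1)) : V :=
  phi (\sum_(j < size X) (-1) ^+ j *: b (map (face 0) (rm1 j X)) ((nth 0 X j).1 ord0)).
End Simplicial.

From HB Require Import structures.
From mathcomp Require Import all_boot all_order all_algebra.
Import Order.TTheory GRing.Theory Num.Theory.
Local Open Scope ring_scope.
Set Implicit Arguments. Unset Strict Implicit.

(** The Chevalley-Eilenberg differential splits into a representation part and
    a bracket part.  Every face map [d_k : g_(p+1) -> g_p] is a Lie algebra
    morphism, so the bracket part commutes with the simplicial differential.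
    The faces [d_k], [k > 0], also preserve [\hat t], while
    [\hat t (d_0 xi) = \hat t xi - mu (x^0)]; since [rho_0^0 (mu x) = phi (rho_1 x)],
    the representation part commutes with the simplicial differential up to
    exactly the term [phi (sum_j (-1)^j rho_1 (x_j^0) w (d_0 Xi(j)))]. *)

Section Linear.
Variables (K : fieldType) (U V : lmodType K) (f : U -> V).
Hypothesis f_lin : lin f.

Lemma linD x y : f (x + y) = f x + f y.
Proof. by have := f_lin 1 x y; rewrite !scale1r. Qed.

Lemma lin0 : f 0 = 0.
Proof. by apply: (@addrI _ (f 0)); rewrite addr0 -linD addr0. Qed.

Lemma linZ a x : f (a *: x) = a *: f x.
Proof. by have := f_lin a x 0; rewrite !addr0 lin0 addr0. Qed.

Lemma linN x : f (- x) = - f x.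
Proof. by rewrite -scaleN1r linZ scaleN1r. Qed.

Lemma linB x y : f (x - y) = f x - f y.
Proof. by rewrite linD linN. Qed.

Lemma lin_sum (I : Type) (r : seq I) (P : pred I) (F : I -> U) :
  f (\sum_(i <- r | P i) F i) = \sum_(i <- r | P i) f (F i).
Proof. exact: (big_morph f linD lin0). Qed.

End Linear.

Section LieBracket.
Variables (K : fieldType) (L : lmodType K) (br : L -> L -> L).
Hypothesis br_lie : is_lie br.

Lemma lieDl x y z : br (x + y) z = br x z + br y z.
Proof. by case: br_lie => br_linl _ _ _; exact: (linD (br_linl z)). Qed.

Lemma lieDr x y z : br z (x + y) = br z x + br z y.
Proof. by case: br_lie => _ br_linr _ _; exact: (linD (br_linr z)). Qed.

Lemma lie_anti x y : br y x = - br x y.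
Proof.
have [_ _ br_alt _] := br_lie; apply/eqP; rewrite -addr_eq0 addrC.
by have := br_alt (x + y); rewrite lieDl !lieDr !br_alt add0r addr0 => ->.
Qed.

End LieBracket.

Lemma filter_zip_iota_map (T U : Type) (f : T -> U) (P : pred nat) (s : seq T) i0 :
  [seq x.2 | x <- zip (iota i0 (size s)) (map f s) & P x.1]
  = map f [seq x.2 | x <- zip (iota i0 (size s)) s & P x.1].
Proof. by elim: s i0 => [|a s IHs] i0 //=; case: (P i0); rewrite /= IHs. Qed.

Lemma rm1_map (T U : Type) (f : T -> U) j s : rm1 j (map f s) = map f (rm1 j s).
Proof. by rewrite /rm1 size_map (filter_zip_iota_map f (fun k => k != j)). Qed.

Lemma rm2_map (T U : Type) (f : T -> U) m n s : rm2 m n (map f s) = map f (rm2 m n s).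
Proof. by rewrite /rm2 size_map (filter_zip_iota_map f (fun k => (k != m) && (k != n))). Qed.

Section FaceFamily.
Variables (Z : zmodType) (u : nat -> Z).

Definition face_fam (k m : nat) : Z :=
  if (m.+1 < k)%N then u m else if m.+1 == k then u m + u m.+1 else u m.+1.

Lemma sum_face_fam k p i : (k <= p.+1)%N -> (i <= p)%N ->
  \sum_(i <= m < p) face_fam k m + (if k == p.+1 then u p else 0)
  = if (i < k)%N then \sum_(i <= m < p.+1) u m else \sum_(i.+1 <= m < p.+1) u m.
Proof.
move=> le_k_p1 le_i_p; move: {2}(p - i)%N (erefl (p - i)%N) => n.
elim: n i le_i_p => [|n IHn] i le_i_p p_i.
  have -> : i = p by apply/eqP; rewrite eqn_leq le_i_p -subn_eq0 p_i.
  rewrite big_geq // add0r; case: ltnP => [lt_p_k | le_k_p].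
    by rewrite (_ : k = p.+1) ?eqxx ?big_nat1 //; apply/eqP; rewrite eqn_leq le_k_p1.
  by rewrite big_geq // ifN // neq_ltn ltnS le_k_p.
have lt_i_p : (i < p)%N by rewrite -subn_gt0 p_i.
have lt_i_p1 : (i < p.+1)%N by rewrite ltnS ltnW.
have lt_i1_p1 : (i.+1 < p.+1)%N by [].
rewrite (big_ltn lt_i_p) -addrA IHn //; last by rewrite subnS p_i.
rewrite /face_fam; case: (ltngtP i.+1 k) => _.
- by rewrite [RHS](big_ltn lt_i_p1).
- by rewrite [RHS](big_ltn lt_i1_p1).
- by rewrite [RHS](big_ltn lt_i_p1) [in RHS](big_ltn lt_i1_p1) addrA.
Qed.

End FaceFamily.

Section Faces.
Variables (K : fieldType) (g h : lmodType K) (mu : g -> h).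

Lemma xatE p (x : {ffun 'I_p -> g}) m (lt_m_p : (m < p)%N) :
  xat x m = x (Ordinal lt_m_p).
Proof. by rewrite /xat insubT. Qed.

Lemma xat_ord p (x : {ffun 'I_p -> g}) (i : 'I_p) : xat x i = x i.
Proof. by rewrite (xatE x (ltn_ord i)); congr (x _); apply: val_inj. Qed.

Lemma sum_xat (Z : zmodType) (F : g -> Z) p (x : {ffun 'I_p -> g}) :
  \sum_(i < p) F (x i) = \sum_(0 <= m < p) F (xat x m).
Proof. by rewrite big_mkord; apply: eq_bigr => i _; rewrite xat_ord. Qed.

Lemma xat_face p k (a : gp g h p.+1) m : (m < p)%N ->
  xat (face mu k a).1 m = face_fam (xat a.1) k m.
Proof. by move=> lt_m_p; rewrite (xatE _ lt_m_p) ffunE. Qed.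

Lemma face_snd p k (a : gp g h p.+1) :
  (face mu k a).2 = a.2 + (if k == p.+1 then mu (xat a.1 p) else 0).
Proof. by rewrite /face /=; case: eqP; rewrite ?addr0. Qed.

Lemma ystrS p (a : gp g h p) i : (i.+1 < p)%N ->
  ystr mu a i = ystr mu a i.+1 + mu (xat a.1 i.+1).
Proof. by move=> lt_i1_p; rewrite /ystr big_ltn // (addrC (mu _)) addrA. Qed.

Lemma ystr_last p (a : gp g h p.+1) : ystr mu a p = a.2.
Proof. by rewrite /ystr big_geq // addr0. Qed.

Hypothesis mu_lin : lin mu.

Lemma sum_mu_xat_face p k (a : gp g h p.+1) i : (k <= p.+1)%N -> (i <= p)%N ->
  \sum_(i <= m < p) mu (xat (face mu k a).1 m) + (if k == p.+1 then mu (xat a.1 p) else 0)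
  = if (i < k)%N then \sum_(i <= m < p.+1) mu (xat a.1 m)
    else \sum_(i.+1 <= m < p.+1) mu (xat a.1 m).
Proof.
move=> le_k_p1 le_i_p; rewrite -sum_face_fam //; congr (_ + _).
apply: eq_big_nat => m /andP[_ lt_m_p]; rewrite xat_face // /face_fam.
by case: ifP => // _; case: ifP => // _; apply: linD.
Qed.

Lemma ystr_face p k (a : gp g h p.+1) i : (k <= p.+1)%N -> (i < p)%N ->
  ystr mu (face mu k a) i = if (i.+1 < k)%N then ystr mu a i else ystr mu a i.+1.
Proof.
move=> le_k_p1 lt_i_p; rewrite /ystr face_snd -addrA (addrC (if _ then _ else _)).
by rewrite sum_mu_xat_face //; case: ifP.
Qed.

Lemma that_face p k (a : gp g h p.+1) :
  (0 < k <= p.+1)%N -> that mu (face mu k a) = that mu a.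
Proof.
case/andP=> k_gt0 le_k_p1; rewrite /that face_snd !sum_xat -addrA.
by rewrite (addrC (if _ then _ else _)) sum_mu_xat_face // k_gt0.
Qed.

Lemma that_face0 p (a : gp g h p.+1) : that mu (face mu 0 a) + mu (a.1 ord0) = that mu a.
Proof.
have := @sum_mu_xat_face p 0 a 0 (leq0n _) (leq0n _).
rewrite /that face_snd !sum_xat /= !addr0 => ->.
by rewrite [in RHS]big_ltn // -(xat_ord a.1 ord0) addrAC -addrA.
Qed.

End Faces.

Section CrossedModule.
Variables (K : fieldType) (g h : lmodType K) (brg : g -> g -> g) (brh : h -> h -> h)
  (mu : g -> h) (act : h -> g -> g).
Hypothesis cm : crossed_module brg brh mu act.

Let brg_lie := cm_lie_g cm.
Let brh_lie := cm_lie_h cm.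
Let mu_lin := (cm_mu cm).1.

Lemma actDl y y' x : act (y + y') x = act y x + act y' x.
Proof. exact: (linD (cm_act_linh cm x)). Qed.

Lemma actDr y x x' : act y (x + x') = act y x + act y x'.
Proof. exact: (linD (cm_act_lin cm y)). Qed.

Lemma brh_addmu y y' x x' :
  brh (y + mu x) (y' + mu x') = brh y y' + mu (brg x x' + act y x' - act y' x).
Proof.
rewrite (linB mu_lin) (linD mu_lin) (cm_mu cm).2 !(cm_equiv cm).
rewrite !(lieDl brh_lie) !(lieDr brh_lie) (lie_anti brh_lie (mu x) y') opprK.
by rewrite !addrA [LHS](ACl (1*4*2*3)).
Qed.

(* Merging two adjacent entries commutes with the bracket thanks to the Peiffer
   identity, which turns the actions of [mu a1] and [mu b1] into brackets. *)
Lemma brg_merge a0 a1 b0 b1 ya yb :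
  brg (a0 + a1) (b0 + b1) + act ya (b0 + b1) - act yb (a0 + a1)
  = (brg a0 b0 + act (ya + mu a1) b0 - act (yb + mu b1) a0)
    + (brg a1 b1 + act ya b1 - act yb a1).
Proof.
rewrite !actDl !actDr !(cm_peiffer cm) !(lieDl brg_lie) !(lieDr brg_lie).
rewrite (lie_anti brg_lie a0 b1) !opprD !opprK !addrA.
by rewrite [LHS](ACl (1*5*3*7*2*4*6*8)).
Qed.

Lemma xat_br p (a b : gp g h p) m : (m < p)%N ->
  xat (gp_br brg brh mu act a b).1 m
  = brg (xat a.1 m) (xat b.1 m) + act (ystr mu a m) (xat b.1 m)
    - act (ystr mu b m) (xat a.1 m).
Proof. by move=> lt_m_p; rewrite !(xatE _ lt_m_p) ffunE. Qed.

Lemma face_br p k (a b : gp g h p.+1) : (k <= p.+1)%N ->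
  face mu k (gp_br brg brh mu act a b)
  = gp_br brg brh mu act (face mu k a) (face mu k b).
Proof.
move=> le_k_p1; congr (_, _); last first.
  by rewrite /face /=; case: eqP => // _; rewrite xat_br // !ystr_last brh_addmu.
apply/ffunP => i; have lt_i_p := ltn_ord i.
have lt_i_p1 : (i < p.+1)%N := ltnW lt_i_p.
rewrite !ffunE !ystr_face //; case: (ltngtP i.+1 k) => _; rewrite !xat_br //.
by rewrite (ystrS mu a) // (ystrS mu b) // brg_merge.
Qed.

End CrossedModule.

Section Cochains.
Variables (K : fieldType) (g h V W : lmodType K) (brg : g -> g -> g) (brh : h -> h -> h)
  (mu : g -> h) (act : h -> g -> g) (phi : W -> V) (rho00 : h -> V -> V) (rho1 : g -> V -> W).

Hypothesis cm : crossed_module brg brh mu act.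
Hypotheses (mu_lin : lin mu) (phi_lin : lin phi).
Hypotheses (rho00_lin : forall y, lin (rho00 y))
  (rho00_linh : forall v, lin (fun y => rho00 y v)).
Hypothesis rho00_mu : forall x v, rho00 (mu x) v = phi (rho1 x v).

Definition rep_term p (w : seq (gp g h p) -> V) (X : seq (gp g h p)) : V :=
  \sum_(j < size X) (-1) ^+ j *: rho00 (that mu (nth 0 X j)) (w (rm1 j X)).

Definition br_term p (w : seq (gp g h p) -> V) (X : seq (gp g h p)) : V :=
  \sum_(m < size X) \sum_(n < size X | (m < n)%N)
    (-1) ^+ (m + n) *: w (gp_br brg brh mu act (nth 0 X m) (nth 0 X n) :: rm2 m n X).

Lemma delta0E p (w : seq (gp g h p) -> V) :
  delta0 brg brh mu act rho00 w = fun X => rep_term w X + br_term w X.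
Proof. by []. Qed.

Lemma bdD p (w1 w2 : seq (gp g h p) -> V) X :
  bd mu (fun Y => w1 Y + w2 Y) X = bd mu w1 X + bd mu w2 X.
Proof. by rewrite /bd -big_split; apply: eq_bigr => k _; rewrite scalerDr. Qed.

Lemma rep_term_face p k (w : seq (gp g h p) -> V) (X : seq (gp g h p.+1)) :
  rep_term w (map (face mu k) X)
  = \sum_(j < size X) (-1) ^+ j *:
      rho00 (that mu (face mu k (nth 0 X j))) (w (map (face mu k) (rm1 j X))).
Proof.
by rewrite /rep_term size_map; apply: eq_bigr => j _; rewrite (nth_map 0) // rm1_map.
Qed.

Lemma br_term_face p k (w : seq (gp g h p) -> V) (X : seq (gp g h p.+1)) :
  (k <= p.+1)%N ->
  br_term w (map (face mu k) X)
  = \sum_(m < size X) \sum_(n < size X | (m < n)%N) (-1) ^+ (m + n) *: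
      w (map (face mu k) (gp_br brg brh mu act (nth 0 X m) (nth 0 X n) :: rm2 m n X)).
Proof.
move=> le_k_p1; rewrite /br_term size_map.
by apply: eq_bigr => m _; apply: eq_bigr => n _; rewrite !(nth_map 0) // rm2_map /= face_br.
Qed.

Lemma br_term_bd p (w : seq (gp g h p) -> V) (X : seq (gp g h p.+1)) :
  br_term (bd mu w) X = bd mu (br_term w) X.
Proof.
rewrite /bd; under [RHS]eq_bigr => k _ do rewrite (@br_term_face p k w X (ltn_ord k)).
rewrite /br_term /=; under eq_bigr => m _ do under eq_bigr => n _ do rewrite scaler_sumr.
under eq_bigr => m _ do rewrite exchange_big; rewrite exchange_big.
apply: eq_bigr => k _; rewrite scaler_sumr; apply: eq_bigr => m _.
by rewrite scaler_sumr; apply: eq_bigr => n _; rewrite !scalerA mulrC.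
Qed.

Lemma rep_term_bd p (w : seq (gp g h p) -> V) (X : seq (gp g h p.+1)) :
  rep_term (bd mu w) X
  = bd mu (rep_term w) X
    + phi (\sum_(j < size X) (-1) ^+ j *:
             rho1 ((nth 0 X j).1 ord0) (w (map (face mu 0) (rm1 j X)))).
Proof.
rewrite /bd; under [in RHS]eq_bigr => k _ do rewrite rep_term_face.
rewrite /rep_term /=; under eq_bigr => j _ do rewrite (lin_sum (rho00_lin _)) scaler_sumr.
rewrite exchange_big /= big_ord_recl [in RHS]big_ord_recl [RHS]addrAC.
congr (_ + _).
  rewrite expr0 scale1r (lin_sum phi_lin) -big_split; apply: eq_bigr => j _ /=.
  rewrite (linZ (rho00_lin _)) scale1r (linZ phi_lin) -rho00_mu -scalerDr.
  by rewrite -(linD (rho00_linh _)) that_face0.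
apply: eq_bigr => k _; rewrite scaler_sumr; apply: eq_bigr => j _.
rewrite (linZ (rho00_lin _)) !scalerA mulrC that_face //; exact: ltn_ord k.
Qed.

Lemma delta0_bd p (w : seq (gp g h p) -> V) (X : seq (gp g h p.+1)) :
  delta0 brg brh mu act rho00 (bd mu w) X
  = bd mu (delta0 brg brh mu act rho00 w) X
    + phi (\sum_(j < size X) (-1) ^+ j *:
             rho1 ((nth 0 X j).1 ord0) (w (map (face mu 0) (rm1 j X)))).
Proof. by rewrite !delta0E /= bdD rep_term_bd br_term_bd addrAC. Qed.

End Cochains.

Theorem mainTheorem9 (K : fieldType) (g h V W : lmodType K)
  (brg : g -> g -> g) (brh : h -> h -> h) (mu : g -> h) (act : h -> g -> g)
  (phi : W -> V) (rho01 : h -> W -> W) (rho00 : h -> V -> V) (rho1 : g -> V -> W) :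
  crossed_module brg brh mu act ->
  lin phi ->
  two_rep brg brh mu act phi rho01 rho00 rho1 ->
  forall (p q : nat) (w : seq ({ffun 'I_p -> g} * h) -> V),
  is_cochain q w ->
  forall X : seq ({ffun 'I_p.+1 -> g} * h), size X = q.+1 ->
  delta0 brg brh mu act rho00 (bd mu w) X
    = bd mu (delta0 brg brh mu act rho00 w) X
      + phi (\sum_(j < q.+1) (-1) ^+ j *:
               rho1 ((nth 0 X j).1 ord0) (w (map (face mu 0) (rm1 j X))))
  /\
  delta0 brg brh mu act rho00 (bd mu w) X
    = bd mu (delta0 brg brh mu act rho00 w) X
      + Delta mu phi (delta1 rho1 w) X.
Proof.
move=> cm phi_lin rep p q w _ X size_X.
have [rho00_lin rho00_linh _] := tr_rho00 rep.
have bd_defect := delta0_bd cm (cm_mu cm).1 phi_lin rho00_lin rho00_linh (tr_mu0 rep) w X.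
by split; [rewrite bd_defect size_X | exact: bd_defect].
Qed.
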